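(* Let $\iota$ be a unimodal sp-implication, let $(\mathfrak F_i)_{i\in I}$ be a family of frames and $\mathfrak G$ a frame with $(\mathfrak F_i)_{i\in I}\gg\mathfrak G$. If $\mathfrak F_i$ validates $\iota$ for every $i\in I$, then $\mathfrak G$ validates $\iota$.
   Context: Unimodal setting: one diamond $\Diamond$; sp-formulas built from variables and $\top$ by $\wedge,\Diamond$; sp-implications $\sigma\to\tau$; frames $(W,R)$ with standard Kripke semantics, a frame validating $\sigma\to\tau$ if at every point of every model over it $\sigma$ implies $\tau$. A homomorphism $h:(W_1,R_1)\to(W_2,R_2)$ is a map with $(x,y)\in R_1\Rightarrow(h(x),h(y))\in R_2$. A finite tree is a finite frame $(T,R^{\mathfrak T})$ that is a directed tree (irreflexive, with a root from which every point is reached by a unique path). Let $\mathfrak F_i=(W_i,R_i)$ ($i\in I$), $\mathfrak G=(W,R^{\mathfrak G})$, $\mathfrak T=(T,R^{\mathfrak T})$ be frames, $w\in T$, $g_i:\mathfrak T\to\mathfrak F_i$ and $h:\mathfrak T\to\mathfrak G$ homomorphisms, and $Z\subseteq(\prod_{i\in I}W_i)\times W$. Write $(\mathfrak F_i,g_i)_{i\in I}\gg_Z(\mathfrak G,h,w)$ if: (s1) $((g_i(w))_{i\in I},h(w))\in Z$; (s2) for all $(\bar x,y)\in Z$ and $\bar x'=(x'_i)_{i\in I}\in\prod_iW_i$ with $(x_i,x'_i)\in R_i$ for all $i$, there is $y'$ with $(y,y')\in R^{\mathfrak G}$ and $(\bar x',y')\in Z$; (s3) for all $(\bar x,y)\in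 Z$ and $A\subseteq T$, if $x_i\in g_i[A]$ for all $i\in I$ then $y\in h[A]$. Write $(\mathfrak F_i)_{i\in I}\gg\mathfrak G$ if for every finite tree $\mathfrak T$ with root $w$ and every homomorphism $h:\mathfrak T\to\mathfrak G$ there exist homomorphisms $g_i:\mathfrak T\to\mathfrak F_i$ ($i\in I$) and $Z$ such that $(\mathfrak F_i,g_i)_{i\in I}\gg_Z(\mathfrak G,h,w)$. *)

From mathcomp Require Import all_boot.
Set Implicit Arguments. Unset Strict Implicit. Unset Printing Implicit Defensive.

Inductive spform : Type :=
| SVar : nat -> spform
| STop : spform
| SAnd : spform -> spform -> spform
| SDia : spform -> spform.

Fixpoint sat (W : Type) (R : W -> W -> Prop) (V : nat -> W -> Prop)
  (phi : spform) (x : W) : Prop :=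
  match phi with
  | SVar n => V n x
  | STop => True
  | SAnd a b => sat R V a x /\ sat R V b x
  | SDia a => exists y, R x y /\ sat R V a y
  end.

Definition validates (W : Type) (R : W -> W -> Prop) (sigma tau : spform) : Prop :=
  forall (V : nat -> W -> Prop) (x : W), sat R V sigma x -> sat R V tau x.

Definition frame_hom (W1 W2 : Type) (R1 : W1 -> W1 -> Prop)
  (R2 : W2 -> W2 -> Prop) (h : W1 -> W2) : Prop :=
  forall x y, R1 x y -> R2 (h x) (h y).

Definition is_tree_rooted (T : finType) (RT : rel T) (w : T) : Prop :=
  (forall x, ~~ RT x x) /\
  (forall x : T, exists s, path RT w s /\ last w s = x) /\
  (forall (x : T) (s1 s2 : seq T),
      path RT w s1 -> last w s1 = x ->
      path RT w s2 -> last w s2 = x -> s1 = s2).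

Definition sim_at (I : Type) (W : I -> Type) (R : forall i, W i -> W i -> Prop)
  (WG : Type) (RG : WG -> WG -> Prop) (T : finType)
  (g : forall i, T -> W i) (h : T -> WG) (w : T)
  (Z : (forall i, W i) -> WG -> Prop) : Prop :=
  (* (s1) *) Z (fun i => g i w) (h w) /\
  (* (s2) *) (forall (x : forall i, W i) (y : WG) (x' : forall i, W i),
                Z x y -> (forall i, R i (x i) (x' i)) ->
                exists y', RG y y' /\ Z x' y') /\
  (* (s3) *) (forall (x : forall i, W i) (y : WG) (A : T -> Prop),
                Z x y -> (forall i, exists a, A a /\ g i a = x i) ->
                exists a, A a /\ h a = y).

Definition gg (I : Type) (W : I -> Type) (R : forall i, W i -> W i -> Prop)
  (WG : Type) (RG : WG -> WG -> Prop) : Prop :=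
  forall (T : finType) (RT : rel T) (w : T),
    is_tree_rooted RT w ->
    forall h : T -> WG, frame_hom (fun a b => RT a b) RG h ->
    exists (g : forall i, T -> W i) (Z : (forall i, W i) -> WG -> Prop),
      (forall i, frame_hom (fun a b => RT a b) (R i) (g i)) /\
      sim_at R RG g h w Z.

(** The sp-formula [sigma] is unravelled into a finite tree [ftree sigma]: its
    nodes are the diamond positions of [sigma], and a variable holds at a node
    iff it occurs as a conjunct there.  [sigma] holds at the root of this
    tree model, and whenever [sigma] holds at a point of a model, the tree
    maps homomorphically into the model, root to that point.  Given [x |= sigma] in
    [G], take such a map [h]; the condition [(F_i) >> G] yields maps [g_i] of
    the tree into the [F_i] and a simulation [Z].  Valuing each variable in
    [F_i] by the [g_i]-image of its nodes makes [sigma], hence [tau], true at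
    [g_i(root)] in every [F_i], and sp-formulas true in every component of a
    [Z]-related tuple are true at the related point of [G]: conjunctions are
    trivial, diamonds use (s2), and variables use (s3) together with [h]. *)
From mathcomp Require Import all_boot.
From Stdlib Require Import ClassicalEpsilon.

Set Implicit Arguments.
Unset Strict Implicit.
Unset Printing Implicit Defensive.

Lemma sat_hom (W1 W2 : Type) (R1 : W1 -> W1 -> Prop) (R2 : W2 -> W2 -> Prop)
    (V1 : nat -> W1 -> Prop) (V2 : nat -> W2 -> Prop) (h : W1 -> W2) :
  frame_hom R1 R2 h -> (forall n x, V1 n x -> V2 n (h x)) ->
  forall phi x, sat R1 V1 phi x -> sat R2 V2 phi (h x).
Proof.
move=> hom hV; elim=> [n||a IHa b IHb|a IHa] x //=.
- exact: hV.
- by case=> /IHa ? /IHb.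
- by case=> y [xy /IHa ?]; exists (h y); split; first exact: hom.
Qed.

Lemma sim_sat (I : Type) (W : I -> Type) (R : forall i, W i -> W i -> Prop)
    (V : forall i, nat -> W i -> Prop) (WG : Type) (RG : WG -> WG -> Prop)
    (VG : nat -> WG -> Prop) (Z : (forall i, W i) -> WG -> Prop) :
  (forall x y x', Z x y -> (forall i, R i (x i) (x' i)) ->
     exists y', RG y y' /\ Z x' y') ->
  (forall n x y, Z x y -> (forall i, V i n (x i)) -> VG n y) ->
  forall phi x y, Z x y -> (forall i, sat (R i) (V i) phi (x i)) ->
  sat RG VG phi y.
Proof.
move=> forth Zvar; elim=> [n||a IHa b IHb|a IHa] x y Zxy /= satx.
- exact: Zvar Zxy satx.
- done.
- by split; [apply: (IHa x) | apply: (IHb x)] => // i; case: (satx i).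
- pose x' i := epsilon (inhabits (x i)) (fun z => R i (x i) z /\ sat (R i) (V i) a z).
  have x'P i : R i (x i) (x' i) /\ sat (R i) (V i) a (x' i).
    exact: epsilon_spec (satx i).
  have [y' [yy' Zxy']] := forth x y x' Zxy (fun i => (x'P i).1).
  by exists y'; split; last by apply: (IHa x') => // i; case: (x'P i).
Qed.

Section ParentTree.
Variables (T : finType) (root : T) (parent : T -> T) (rank : T -> nat).
Hypothesis rank_parent : forall b, b != root -> rank (parent b) < rank b.

Definition parent_rel : rel T := fun a b => (b != root) && (a == parent b).

Lemma parent_path_to_root s :
  path parent_rel root s -> last root s = root -> s = [::].
Proof.
case/lastP: s => // s y; rewrite rcons_path last_rcons => /andP[_ /andP[ny _]] ey.
by rewrite ey eqxx in ny.
Qed.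

Lemma parent_rel_tree : is_tree_rooted parent_rel root.
Proof.
split; [|split].
- move=> a; apply/negP => /andP[na /eqP ea].
  by have := rank_parent na; rewrite -ea ltnn.
- move=> x; have [n] := ubnP (rank x); elim: n x => // n IH x /ltnSE lt_xn.
  have [->|nx] := eqVneq x root; first by exists [::].
  have [s [ps ls]] := IH (parent x) (leq_trans (rank_parent nx) lt_xn).
  by exists (rcons s x); rewrite rcons_path last_rcons ps ls /parent_rel nx eqxx.
- move=> x s1; elim/last_ind: s1 x => [|s1 y IH] x s2 p1 l1 p2 l2.
    by rewrite (parent_path_to_root p2) // l2 -l1.
  case/lastP: s2 p2 l2 => [|s2 z] p2 l2.
    have /(congr1 size) := parent_path_to_root p1 (etrans l1 (esym l2)).
    by rewrite size_rcons.
  move: p1 p2 l1 l2; rewrite !rcons_path !last_rcons => /andP[p1 /andP[_ /eqP e1]].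
  move=> /andP[p2 /andP[_ /eqP e2]] <- ezy; subst z.
  by rewrite (IH _ _ p1 e1 p2 e2).
Qed.
End ParentTree.

(** Positions in an sp-formula are paths of directions read from the innermost
    step outwards: [0] and [1] select the left and right conjunct, [2] goes
    under a diamond. *)
Definition subform_step (d : nat) (phi : spform) : option spform :=
  match d, phi with
  | 0, SAnd a _ => Some a
  | 1, SAnd _ b => Some b
  | 2, SDia a => Some a
  | _, _ => None
  end.

Fixpoint subform (phi : spform) (s : seq nat) : option spform :=
  if s is d :: s' then obind (subform_step d) (subform phi s') else Some phi.

Fixpoint positions (phi : spform) : seq (seq nat) :=
  [::] :: match phi with
          | SAnd a b => map (rcons^~ 0) (positions a) ++ map (rcons^~ 1) (positions b)
          | SDia a => map (rcons^~ 2) (positions a)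
          | _ => [::]
          end.

Lemma subform_rcons phi s d :
  subform phi (rcons s d) = obind (subform^~ s) (subform_step d phi).
Proof.
elim: s => [|e s IH] /=; first by case: (subform_step d phi).
by rewrite IH; case: (subform_step d phi).
Qed.

Lemma mem_positions phi s : subform phi s -> s \in positions phi.
Proof.
elim: phi s => [n||a IHa b IHb|a IHa] s; case/lastP: s => [|s d];
  rewrite ?in_cons ?eqxx //= subform_rcons; case: d => [|[|[|d]]] //= sub_s.
- by rewrite mem_cat (map_f _ (IHa _ sub_s)) orbT.
- by rewrite mem_cat (map_f _ (IHb _ sub_s)) !orbT.
- by rewrite (map_f _ (IHa _ sub_s)) orbT.
Qed.

Lemma subform_behead phi d s : subform phi (d :: s) -> subform phi s.
Proof. by rewrite /=; case: (subform phi s). Qed.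

(** [world_of s] strips the conjunction steps innermost in [s]: it is the
    position of the diamond (or of the root) at whose world the subformula at
    [s] is evaluated. *)
Fixpoint world_of (s : seq nat) : seq nat :=
  if s is d :: s' then (if d == 2 then s else world_of s') else [::].

Lemma world_of_id s : world_of (world_of s) = world_of s.
Proof. by elim: s => [|d s IH] //=; case: ifP => //= ->. Qed.

Lemma size_world_of s : size (world_of s) <= size s.
Proof. by elim: s => [|d s IH] //=; case: ifP => // _; apply: leqW. Qed.

Lemma world_of_cons d s : world_of (d :: s) = d :: s -> d = 2.
Proof.
rewrite /=; case: eqP => // _ e.
by have := size_world_of s; rewrite e ltnn.
Qed.

Lemma subform_world_of phi s : subform phi s -> subform phi (world_of s).
Proof.
elim: s => [|d s IH] //= sub_s; case: ifP => _ //.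
exact/IH/(subform_behead sub_s).
Qed.

Section FormulaTree.
Variable sigma : spform.

Definition world_positions : seq (seq nat) :=
  [seq s <- positions sigma | (world_of s == s) && subform sigma s].

Definition ftree : finType := seq_sub world_positions.

Lemma mem_world_positions s :
  (s \in world_positions) = (world_of s == s) && subform sigma s.
Proof.
rewrite mem_filter andb_idr // => /andP[_]; exact: mem_positions.
Qed.

Lemma world_of_mem s : subform sigma s -> world_of s \in world_positions.
Proof. by move=> sub_s; rewrite mem_world_positions world_of_id eqxx subform_world_of. Qed.

Definition ftree_root : ftree := SeqSub (world_of_mem (s := [::]) erefl).

Definition world (s : seq nat) : ftree := insubd ftree_root (world_of s).

Lemma val_world s : subform sigma s -> val (world s) = world_of s.
Proof. by move=> sub_s; rewrite /world val_insubd world_of_mem. Qed.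

Definition ftree_parent (a : ftree) : ftree := world (behead (val a)).

Definition ftree_rel : rel ftree := parent_rel ftree_root ftree_parent.

Definition ftree_val (n : nat) (a : ftree) : Prop :=
  exists s, subform sigma s = Some (SVar n) /\ world s = a.

Lemma val_ftree (a : ftree) : world_of (val a) = val a /\ subform sigma (val a).
Proof. by have := ssvalP a; rewrite mem_world_positions => /andP[/eqP]. Qed.

Lemma ftree_nonroot (b : ftree) :
  b != ftree_root -> exists2 s, val b = 2 :: s & val (ftree_parent b) = world_of s.
Proof.
rewrite /ftree_parent => nb; have [wb sub_b] := val_ftree b.
case E: (val b) wb sub_b => [|d s].
  by move: nb; rewrite (_ : b = ftree_root) ?eqxx //; apply: val_inj.
move=> /[dup] /world_of_cons -> _ sub_s; exists s => //=.
by rewrite val_world // (subform_behead sub_s).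
Qed.

Lemma ftree_tree : is_tree_rooted ftree_rel ftree_root.
Proof.
apply: (@parent_rel_tree _ _ _ (fun a => size (val a))) => b /ftree_nonroot[s -> ->].
exact: leq_ltn_trans (size_world_of s) _.
Qed.

Lemma sat_ftree s psi :
  subform sigma s = Some psi -> sat ftree_rel ftree_val psi (world s).
Proof.
elim: psi s => [n||a IHa b IHb|a IHa] s sub_s //=.
- by exists s.
- have sub_a : subform sigma (0 :: s) = Some a by rewrite /= sub_s.
  have sub_b : subform sigma (1 :: s) = Some b by rewrite /= sub_s.
  by split; [exact: IHa _ sub_a | exact: IHb _ sub_b].
- have sub_a : subform sigma (2 :: s) = Some a by rewrite /= sub_s.
  exists (world (2 :: s)); split; last exact: IHa _ sub_a.
  have val_2s : val (world (2 :: s)) = 2 :: s by rewrite val_world ?sub_a.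
  apply/andP; split; first by apply/eqP => /(congr1 val); rewrite val_2s.
  by rewrite /ftree_parent val_2s.
Qed.

Lemma sat_ftree_root : sat ftree_rel ftree_val sigma ftree_root.
Proof.
have -> : ftree_root = world [::] by apply: val_inj; rewrite val_world.
exact: sat_ftree.
Qed.

Section Unravelling.
Variables (W : Type) (RW : W -> W -> Prop) (V : nat -> W -> Prop) (x : W).
Hypothesis x_sigma : sat RW V sigma x.

Definition dia_witness (y : W) (a : spform) : W :=
  epsilon (inhabits y) (fun z => RW y z /\ sat RW V a z).

Lemma dia_witnessP y a :
  sat RW V (SDia a) y -> RW y (dia_witness y a) /\ sat RW V a (dia_witness y a).
Proof. exact: epsilon_spec. Qed.

(** The default [STop] is never used: [point_at] is only evaluated at
    positions of [sigma]. *)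
Fixpoint point_at (s : seq nat) : W :=
  if s is d :: s' then
    if d == 2 then dia_witness (point_at s') (odflt STop (subform sigma s))
    else point_at s'
  else x.

Lemma sat_point_at s psi : subform sigma s = Some psi -> sat RW V psi (point_at s).
Proof.
elim: s psi => [|d s IH] psi /=; first by case=> <-.
case E: (subform sigma s) => [phi|] //= step_psi; have := IH _ E.
case: d step_psi => [|[|[|d]]] //; case: phi E => //=.
- by move=> a b _ [<-] [].
- by move=> a b _ [<-] [].
- by move=> a _ [<-] /dia_witnessP[].
Qed.

Lemma point_at_world_of s : point_at (world_of s) = point_at s.
Proof. by elim: s => [|d s IH] //=; case: eqP => [->|_]. Qed.

Lemma ftree_unravel : exists h : ftree -> W,
  [/\ frame_hom ftree_rel RW h, h ftree_root = x
    & forall n a, ftree_val n a -> V n (h a)].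
Proof.
exists (fun a => point_at (val a)); split => //.
- move=> a b /andP[/ftree_nonroot[s vb vp] /eqP ->].
  have [_] := val_ftree b; rewrite vp point_at_world_of vb /=.
  case E: (subform sigma s) => [[]//= a'|//] _.
  exact: (dia_witnessP (sat_point_at E)).1.
- move=> n _ [s [sub_s <-]]; rewrite val_world ?sub_s // point_at_world_of.
  exact: sat_point_at sub_s.
Qed.
End Unravelling.
End FormulaTree.

Theorem theorem9p1 (I : Type) (W : I -> Type) (R : forall i, W i -> W i -> Prop)
  (WG : Type) (RG : WG -> WG -> Prop) (sigma tau : spform) :
  gg R RG ->
  (forall i, validates (R i) sigma tau) ->
  validates RG sigma tau.
Proof.
move=> gg_FG valid_F V x x_sigma.
have [h [h_hom h_root h_val]] := ftree_unravel x_sigma.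
have [g [Z [g_hom [Z_root [Z_forth Z_var]]]]] := gg_FG _ _ _ (ftree_tree sigma) h h_hom.
pose VF i n (z : W i) := exists a, @ftree_val sigma n a /\ g i a = z.
have F_sigma i : sat (R i) (VF i) sigma (g i (ftree_root sigma)).
  by apply: (sat_hom (g_hom i)) (sat_ftree_root sigma) => n a ?; exists a.
rewrite -h_root; apply: (sim_sat (V := VF) Z_forth _ Z_root) => [n xs y Zxy VF_xs | i].
  by have [a [? <-]] := Z_var _ _ (@ftree_val sigma n) Zxy VF_xs; apply: h_val.
exact: valid_F.
Qed.
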